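(* Let $X$ be a topological space with $|X|\ge 2$ and $G$ an infinite Abelian group. If $X$ is not anti-discrete, then every Korovin orbit $G_f$ in $X^G$ is a $T_1$-space.
   Context: $X^G$ carries the product topology. For $f\in X^G$ and $g\in G$ let $gf\in X^G$ be given by $(gf)(x)=f(xg)$, and let $G_f=\{gf:g\in G\}\subseteq X^G$ with the subspace topology. The map $f\colon G\to X$ is a Korovin mapping if $\pi_M(G_f)=X^M$ for every countable $M\subseteq G$, where $\pi_M\colon X^G\to X^M$ is the projection; in that case $G_f$ is called a Korovin orbit. A space is anti-discrete if its only open sets are $\emptyset$ and the whole space. *)

From HB Require Import structures.
From mathcomp Require Import all_boot all_order all_algebra.
From mathcomp Require Import all_classical all_reals all_analysis.
Set Implicit Arguments. Unset Strict Implicit. Unset Printing Implicit Defensive.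
Import GRing.Theory.
Local Open Scope classical_set_scope.
Local Open Scope ring_scope.

(* (g f)(x) = f (x g), i.e. f (x + g) *)
Definition gshift {G : zmodType} {X : Type} (g : G) (f : G -> X) : G -> X :=
  fun x => f (x + g).

Definition korovin_orbit {G : zmodType} {X : topologicalType} (f : G -> X)
  : set {ptws G -> X} := [set gshift g f | g in [set: G]].

(* pi_M (G_f) = X^M for every countable M, X^M = functions M -> X *)
Definition korovin_mapping {G : zmodType} {X : Type} (f : G -> X) : Prop :=
  forall M : set G, countable M ->
    forall h : set_type M -> X, exists g : G,
      forall x : set_type M, gshift g f (set_val x) = h x.

Definition anti_discrete (X : topologicalType) : Prop :=
  forall U : set X, open U -> U = set0 \/ U = [set: X].

From HB Require Import structures.
From mathcomp Require Import all_boot all_order all_algebra.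
From mathcomp Require Import all_classical all_reals all_analysis.
Import GRing.Theory.
Local Open Scope classical_set_scope.
Local Open Scope ring_scope.

(* A non-anti-discrete space has an open set U and points a in U, b outside
   U.  Given distinct orbit points g1 f and g2 f, the Korovin property applied
   to the two-point set {g1, g2} yields g with f (g1 + g) = a and
   f (g2 + g) = b; as G is Abelian these are the values of g1 f and g2 f at g,
   so the preimage of U under evaluation at g separates them. *)

Lemma not_anti_discrete_separating_open {X : topologicalType} :
  ~ anti_discrete X -> exists U : set X, exists a b, [/\ open U, U a & ~ U b].
Proof.
move=> nad; apply: contra_notP nad => noU V oV.
have [->|/set0P[a Va]] := eqVneq V set0; first by left.
right; apply/seteqP; split=> // b _.
by apply: contra_notP noU => nVb; exists V, a, b.
Qed.

Lemma korovin_mapping_interpolate2 {G : zmodType} {X : Type} {f : G -> X}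
    (kor : korovin_mapping f) {x1 x2 : G} (x12 : x1 != x2) (a b : X) :
  exists g : G, gshift g f x1 = a /\ gshift g f x2 = b.
Proof.
have cM : countable [set x1; x2].
  by apply: finite_set_countable; rewrite finite_setU; split; exact: finite_set1.
have [g Hg] := kor _ cM (fun z => if set_val z == x1 then a else b).
exists g; split.
- by have := Hg (exist _ x1 (mem_set (or_introl erefl))); rewrite /= eqxx.
- have := Hg (exist _ x2 (mem_set (or_intror erefl))).
  by rewrite /= eq_sym (negbTE x12).
Qed.

Lemma subspace_eval_continuous {T : choiceType} {X : topologicalType}
    (A : set {ptws T -> X}) (t : T) :
  continuous (fun phi : set_type A => (set_val phi : {ptws T -> X}) t).
Proof.
move=> phi; apply: (@continuous_comp (set_type A) {ptws T -> X} X
  set_val (fun h : {ptws T -> X} => h t) phi).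
- exact: initial_continuous.
- exact: (@proj_continuous T (fun=> X) t).
Qed.

Lemma gshiftC {G : zmodType} {X : Type} (f : G -> X) (g h : G) :
  gshift g f h = gshift h f g.
Proof. by rewrite /gshift addrC. Qed.

Theorem proposition4p1 (X : topologicalType) (G : zmodType) (f : G -> X) :
  (exists x y : X, x <> y) ->
  infinite_set [set: G] ->
  ~ anti_discrete X ->
  korovin_mapping f ->
  accessible_space (set_type (korovin_orbit f)).
Proof.
move=> _ _ /not_anti_discrete_separating_open[U [a [b [oU Ua nUb]]]] kor.
move=> [p P] [q Q] pq.
have [g1 _ Ep] := set_mem P; have [g2 _ Eq] := set_mem Q; subst p q.
have g12 : g1 != g2.
  by apply: contraNneq pq => e; apply/eqP/eq_exist; rewrite e.
have [g [Ea Eb]] := korovin_mapping_interpolate2 kor g12 a b.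
exists ((fun phi : set_type (korovin_orbit f) => (set_val phi : {ptws G -> X}) g)
          @^-1` U); split.
- by apply: open_comp => // phi _; exact: subspace_eval_continuous.
- by rewrite inE /= set_valE /= gshiftC Ea.
- by rewrite inE /= set_valE /= gshiftC Eb.
Qed.
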